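(* Consider the closed-loop scalar system $\dot X(t)=aX(t)+bU(t)$ with $a>0$, $b\neq0$, and the corresponding open-loop system $\dot X(t)=aX(t)$ (i.e. $b=0$), both with random initial state $X(0)$ satisfying $h(X(0))<\infty$ and $|X(0)|<L$ ($L$ known to sensor and controller), with the sensor communicating to the controller/estimator over the timing channel described in the context. If there exists a controller such that in closed loop $|X(t)|\to0$ in probability as $t\to\infty$, then there exists an estimator such that in open loop $|X(t)-\hat X(t)|\to0$ in probability as $t\to\infty$.
   Context: Timing channel: symbols from a one-element alphabet; the channel is initialized with a symbol received at time $0$; after the acknowledgment of the $i$-th reception, the sender waits $W_{i+1}\ge0$ and transmits the next symbol, received after an i.i.d. random delay $S_{i+1}\ge0$; $D_i=W_i+S_i$, $\mathcal{T}_n=\sum_{i\le n}D_i$. The sensor knows $X(0)$, $L$ and the dynamics and encodes into the waiting times (random i.i.d. codebook independent of the delays; acknowledgments used only to avoid queuing). The controller (resp. estimator), at any time $t$, computes $U(t)$ (resp. $\hat X(t)$) from the inter-reception times of all symbols received up to time $t$, together with $L$ and the dynamics. *)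

From HB Require Import structures.
From mathcomp Require Import all_boot all_order all_algebra.
From mathcomp Require Import all_classical all_reals all_analysis.
Set Implicit Arguments. Unset Strict Implicit. Unset Printing Implicit Defensive.
Import Order.TTheory GRing.Theory Num.Theory.
Import numFieldNormedType.Exports.
Local Open Scope classical_set_scope.
Local Open Scope ring_scope.

Section TimingChannel.
Context (R : realType) (dO : measure_display) (Omega : measurableType dO).

(** X0 has a density f w.r.t. Lebesgue measure and its differential entropy
    h(X0) = - \int f ln f is finite (f ln f Lebesgue-integrable; ln 0 = 0,
    i.e. the convention 0 ln 0 = 0). *)
Definition finite_diff_entropy (P : probability Omega R) (X0 : Omega -> R) :=
  exists f : R -> R,
    [/\ (forall x, 0 <= f x), measurable_fun setT f,
        (forall A, measurable A ->
           P (X0 @^-1` A) = (\int[lebesgue_measure]_(x in A) (f x)%:E)%E)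
      & lebesgue_measure.-integrable setT (fun x => (f x * ln (f x))%:E)].

(** The delays (S i)_i are i.i.d. and the sequence is independent of the
    pair (X0, C) (initial state, random codebook). *)
Definition iid_delays_indep (dT : measure_display) (Theta : measurableType dT)
    (P : probability Omega R) (X0 : Omega -> R) (C : Omega -> Theta)
    (S : nat -> Omega -> R) :=
  (forall i j (E : set R), measurable E ->
     P (S i @^-1` E) = P (S j @^-1` E)) /\
  (forall (F : seq nat) (E : nat -> set R) (A : set R) (B : set Theta),
     uniq F -> (forall i, measurable (E i)) -> measurable A -> measurable B ->
     P (X0 @^-1` A `&` C @^-1` B `&` \bigcap_(i in [set` F]) (S i @^-1` E i))
     = (P (X0 @^-1` A `&` C @^-1` B) * \prod_(i <- F) P (S i @^-1` E i))%E).

(** Total delays D_{i+1} = W_{i+1} + S_{i+1} (index shifted by one),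
    waiting times produced by the encoder from X0 and the codebook. *)
Definition Dtot (dT : measure_display) (Theta : measurableType dT)
    (enc : nat -> R -> Theta -> R) (X0 : Omega -> R) (C : Omega -> Theta)
    (S : nat -> Omega -> R) (i : nat) (w : Omega) : R :=
  enc i (X0 w) (C w) + S i w.

(** Reception time of the n-th symbol after the initial one (T_0 = 0). *)
Definition Trec (D : nat -> Omega -> R) (n : nat) (w : Omega) : R :=
  \sum_(i < n) D i w.

(** Information available at time t: the inter-reception times of all
    symbols received up to time t (None = not yet received). *)
Definition observed (D : nat -> Omega -> R) (t : R) (w : Omega) : nat -> option R :=
  fun i => if Trec D i.+1 w <= t then Some (D i w) else None.

(** Closed-loop state of dX = aX + bU, X(0) = X0, by variation of constants. *)
Definition closed_state (a b : R) (X0 : Omega -> R) (U : R -> Omega -> R)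
    (t : R) (w : Omega) : R :=
  expR (a * t) * X0 w +
  fine (\int[lebesgue_measure]_(s in `[0%R, t]%classic) (expR (a * (t - s)) * b * U s w)%:E)%E.

Definition conv0_in_prob (P : probability Omega R) (Y : R -> Omega -> R) :=
  forall eps : R, 0 < eps ->
    P [set w | eps <= `|Y t w|] @[t --> +oo] --> 0%E.

End TimingChannel.

From HB Require Import structures.
From mathcomp Require Import all_boot all_order all_algebra.
From mathcomp Require Import all_classical all_reals all_analysis.
From mathcomp Require Import measurable_realfun.
Import Order.TTheory GRing.Theory Num.Theory.
Import numFieldNormedType.Exports.
Local Open Scope classical_set_scope.
Local Open Scope ring_scope.

(** The estimator replays the controller.  Reception times are partial sums
    of the inter-reception times, so the record observed at time [t] determines
    the record observed at any earlier time [s]; hence the estimator can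
    recompute the control [U(s)] for every [s <= t] and thus the forced term
    [int_0^t e^(a(t-s)) b U(s) ds] of the closed-loop state.  Taking [Xhat(t)]
    to be minus this term makes the open-loop estimation error
    [e^(at) X(0) - Xhat(t)] coincide with the closed-loop state, which tends to
    [0] in probability by assumption.  No property of the channel beyond the
    nonnegativity of the delays is used. *)

Definition rewind_obs {R : realType} (s : R) (o : nat -> option R) : nat -> option R :=
  fun i => if o i is Some d then
     (if \sum_(j < i.+1) odflt 0 (o j) <= s then Some d else None) else None.

Definition replay_estimator {R : realType} (a b : R)
    (u : R -> (nat -> option R) -> R) (t : R) (o : nat -> option R) : R :=
  - fine (\int[lebesgue_measure]_(s in `[0%R, t]%classic)
            (expR (a * (t - s)) * b * u s (rewind_obs s o))%:E)%E.

Section Replay.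
Context {R : realType} {dO : measure_display} {Omega : measurableType dO}.
Context {D : nat -> Omega -> R}.
Hypothesis D_ge0 : forall i w, 0 <= D i w.

Lemma Trec_le (w : Omega) {m n : nat} : (m <= n)%N -> Trec D m w <= Trec D n w.
Proof.
move=> le_mn.
have := @nondecreasing_series R (fun i => D i w) xpredT 0 (fun i _ _ => D_ge0 i w) m n le_mn.
by rewrite /= !big_mkord.
Qed.

Lemma rewind_observed (s t : R) (w : Omega) :
  s <= t -> rewind_obs s (observed D t w) = observed D s w.
Proof.
move=> le_st; apply: funext => i; rewrite /rewind_obs /observed.
case: ifP => [Ti_le_t | Ti_gt_t]; last first.
  by case: ifP => // Ti_le_s; rewrite (le_trans Ti_le_s le_st) in Ti_gt_t.
suff -> : \sum_(j < i.+1) odflt 0 (if Trec D j.+1 w <= t then Some (D j w) else None)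
          = Trec D i.+1 w by [].
apply: eq_bigr => j _.
by rewrite (le_trans (Trec_le w (ltn_ord j)) Ti_le_t).
Qed.

Lemma replay_estimator_observed (a b : R) (X0 : Omega -> R)
    (u : R -> (nat -> option R) -> R) (t : R) (w : Omega) :
  replay_estimator a b u t (observed D t w) =
  expR (a * t) * X0 w - closed_state a b X0 (fun t w => u t (observed D t w)) t w.
Proof.
rewrite /replay_estimator /closed_state opprD addrA subrr add0r.
congr (- fine _); apply: eq_integral => s; rewrite inE /= in_itv /= => /andP[_ le_st].
by rewrite rewind_observed.
Qed.

End Replay.

Theorem lemma1 (R : realType) (dO : measure_display) (Omega : measurableType dO)
  (P : probability Omega R) (dT : measure_display) (Theta : measurableType dT)
  (a b L : R) (X0 : Omega -> R) (C : Omega -> Theta) (S : nat -> Omega -> R)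
  (enc : nat -> R -> Theta -> R) :
  0 < a -> b != 0 ->
  measurable_fun setT X0 -> measurable_fun setT C ->
  (forall i, measurable_fun setT (S i)) ->
  finite_diff_entropy P X0 ->
  (forall w, `|X0 w| < L) ->
  (forall i w, 0 <= S i w) ->
  iid_delays_indep P X0 C S ->
  (forall i x c, 0 <= enc i x c) ->
  (exists u : R -> (nat -> option R) -> R,
     let U := fun t w => u t (observed (Dtot enc X0 C S) t w) in
     (forall w t, 0 <= t ->
        lebesgue_measure.-integrable `[0, t]%classic (fun s => (U s w)%:E)) /\
     (forall t, measurable_fun setT (closed_state a b X0 U t)) /\
     conv0_in_prob P (closed_state a b X0 U)) ->
  exists xhat : R -> (nat -> option R) -> R,
     let Xhat := fun t w => xhat t (observed (Dtot enc X0 C S) t w) in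
     (forall t, measurable_fun setT (Xhat t)) /\
     conv0_in_prob P (fun t w => expR (a * t) * X0 w - Xhat t w).
Proof.
move=> _ _ mX0 _ _ _ _ S_ge0 _ enc_ge0 [u]; cbv zeta => -[_ [m_closed closed_cvg]].
set D := Dtot enc X0 C S.
have D_ge0 i w : 0 <= D i w by exact: addr_ge0 (enc_ge0 _ _ _) (S_ge0 _ _).
exists (replay_estimator a b u); cbv zeta; split.
- move=> t; under eq_fun do rewrite (replay_estimator_observed D_ge0 a b X0).
  exact: measurable_funB (measurable_funM (measurable_cst _) mX0) (m_closed t).
- under eq_fun do under eq_fun do rewrite (replay_estimator_observed D_ge0 a b X0) subKr.
  exact: closed_cvg.
Qed.
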